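(* Let $s\ge 2$ and $t\ge 2$ be integers, $p=st$, and let $\xi_1,\dots,\xi_s$ be positive integers with $\binom{p-t}{(r-1)t+1}\xi_r=\binom{p-t}{rt}\xi_{r+1}$ for $2\le r\le s-1$ and $(s-1)\xi_1=\binom{p-t}{t}\xi_2$. Let $\mathcal{C}$ be the array code (over a finite field $\mathbb{F}$, with $t$ rows, entries in $\mathbb{F}^p$ with basis $x_1,\dots,x_p$) whose columns are: (Type $T_1$) for each $t$-subset $A\subseteq\{1,\dots,p\}$, $\xi_1$ columns with cells $x_a$, $a\in A$; and (Type $T_r$, for each $2\le r\le s$) for each $(t-1)$-subset $B\subseteq\{1,\dots,p\}$ and each $((r-1)t+1)$-subset $C\subseteq\{1,\dots,p\}\setminus B$, $\xi_r$ columns whose cells are $x_b$ for $b\in B$ together with one cell $\sum_{c\in C}x_c$. Let $m$ be the number of columns of $\mathcal{C}$. Then $\mathcal{C}$ is a $[t\times m,p]$ $k$-PIR array code with PIR rate $k/m=(\beta+\gamma)/(\beta+2\gamma)$, where \[ \beta=\xi_1(p-t+1)+\sum_{r=2}^{s}(t-1)\xi_r\binom{p-t+1}{(r-1)t+1},\qquad \gamma=(p-t+1)\sum_{r=1}^{s-1}\xi_{r+1}\binom{p-t}{rt}. \]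
   Context: A $[t\times m,p]$ array code is a $t\times m$ array whose entries are linear combinations of a basis $x_1,\dots,x_p$ of $\mathbb{F}^p$. It has the $k$-PIR property (is a $k$-PIR array code) if for every $i$ there exist $k$ pairwise disjoint sets $S_1,\dots,S_k$ of columns such that for each $j$ the vector $x_i$ lies in the span of all entries of the columns in $S_j$. Its PIR rate is $k/m$. *)

From HB Require Import structures.
From mathcomp Require Import all_boot all_order all_algebra.
Set Implicit Arguments. Unset Strict Implicit. Unset Printing Implicit Defensive.
Import GRing.Theory.
Local Open Scope ring_scope.

Section ArrayCode.
Variables (F : fieldType) (t p : nat).

(* An array code [t x m, p]: a sequence of m columns; a column is a t x p matrix
   whose i-th row is the i-th cell (a vector of F^p written in the basis x_1..x_p,
   where x_a is the unit row vector delta_mx 0 a). *)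
Definition unitv (a : 'I_p) : 'rV[F]_p := delta_mx 0 a.

(* column whose cells are the listed vectors (padded with 0 if too short) *)
Definition mkcol (cells : seq 'rV[F]_p) : 'M[F]_(t, p) :=
  \matrix_(i < t, j < p) (nth 0 cells i) 0 j.

Definition cols_span (C : seq 'M[F]_(t, p)) (S : {set 'I_(size C)}) : 'M[F]_p :=
  (\sum_(c in S) <<nth 0 C c>>)%MS.

Definition is_kPIR (C : seq 'M[F]_(t, p)) (k : nat) : Prop :=
  forall i : 'I_p, exists S : 'I_k -> {set 'I_(size C)},
    (forall j j' : 'I_k, j != j' -> [disjoint S j & S j']) /\
    (forall j : 'I_k, (unitv i <= cols_span (S j))%MS).
End ArrayCode.

Section Construction.
Variables (F : fieldType) (s t p : nat) (xi : nat -> nat).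

Definition colsT1 : seq 'M[F]_(t, p) :=
  flatten (map (fun A : {set 'I_p} =>
                  nseq (xi 1) (mkcol t (map (@unitv F p) (enum A))))
             (enum [set A : {set 'I_p} | #|A| == t])).

Definition colsTr (r : nat) : seq 'M[F]_(t, p) :=
  flatten (map (fun BC : {set 'I_p} * {set 'I_p} => nseq (xi r)
             (mkcol t (map (@unitv F p) (enum BC.1) ++
                       [:: \sum_(c in BC.2) unitv F c])))
          (enum [set BC : {set 'I_p} * {set 'I_p} |
                          [&& #|BC.1| == t.-1, #|BC.2| == ((r - 1) * t).+1
                            & [disjoint BC.1 & BC.2]]])).

Definition code : seq 'M[F]_(t, p) :=
  colsT1 ++ flatten [seq colsTr r | r <- iota 2 (s - 1)].

Definition beta : nat :=
  (xi 1 * (p - t + 1) +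
   \sum_(2 <= r < s.+1) (t - 1) * xi r * 'C(p - t + 1, (r - 1) * t + 1))%N.

Definition gamma : nat :=
  ((p - t + 1) * \sum_(1 <= r < s) xi r.+1 * 'C(p - t, r * t))%N.
End Construction.

From mathcomp Require Import all_boot all_order all_algebra zify ring.
Set Implicit Arguments. Unset Strict Implicit. Unset Printing Implicit Defensive.
Import GRing.Theory.

(* Fix i.  Each column either has x_i as a cell (direct), or has x_i in its sum
   cell (a summand column of type T_r, r >= 2, on (B, C) with i in C), or avoids
   x_i.  A summand column with sum over C is paired with an avoiding column whose
   cells add up to the sum over C :\ i: a T_(r-1) column on (B', C') with
   B' :|: C' = C :\ i, or a T_1 column on C :\ i when r = 2; the difference of
   the two sums is x_i.  The relations between the xi_r say exactly that for every
   possible set C :\ i there are as many avoiding columns as summand columns, so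
   the recovery sets can be taken to be the direct columns alone and the matched
   pairs.  Thus k = #direct + #summand and m = #direct + 2 #summand, and counting
   with binomial coefficients gives (t - 1) #direct = 'C(p - 1, t - 2) beta and
   (t - 1) #summand = 'C(p - 1, t - 2) gamma. *)

Lemma card_set_nth (T : Type) (x0 : T) (s : seq T) n (P : pred T) : n = size s ->
  #|[set j : 'I_n | P (nth x0 s j)]| = count P s.
Proof.
move=> ->; rewrite -sum1_count (big_nth x0) big_mkord -sum1_card.
by apply: eq_bigl => j; rewrite inE.
Qed.

Lemma count_enum_set (X : finType) (P Q : pred X) :
  count Q (enum [set x | P x]) = #|[set x | P x && Q x]|.
Proof.
rewrite -sum1_count big_enum_cond /= -sum1_card; apply: eq_bigl => x.
by rewrite !inE.
Qed.

Lemma count_flatten_nseq (X Y : Type) (Q : pred Y) (h : X -> Y) n (s : seq X) :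
  count Q (flatten (map (fun x => nseq n (h x)) s)) = n * count (fun x => Q (h x)) s.
Proof.
elim: s => [|x s IH] /=; first by rewrite muln0.
by rewrite count_cat count_nseq IH; case: (Q (h x)) => /=; lia.
Qed.

Lemma count_partition3 (X : eqType) (a b c : pred X) (s : seq X) :
  {in s, forall x, a x + b x + c x = 1} -> count a s + count b s + count c s = size s.
Proof.
elim: s => //= x s IH abc.
have := abc x (mem_head _ _); have := IH (fun y ys => abc y (mem_behead (s := x :: s) ys)).
lia.
Qed.

Lemma sum_seq_supp1 (I : eqType) (s : seq I) (G : I -> nat) i0 :
  i0 \in s -> uniq s -> (forall i, i != i0 -> G i = 0) -> \sum_(i <- s) G i = G i0.
Proof.
move=> i0s us G0; rewrite (bigD1_seq i0) //= big1_seq ?addn0 //.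
by move=> i /andP[ii0 _]; exact: G0.
Qed.

Section FiberMatch.
Variables (I : finType) (K : eqType) (f : I -> K) (X Y : {set I}).

Definition fiber_match (x : I) : I :=
  nth x (enum [set y in Y | f y == f x]) (index x (enum [set x' in X | f x' == f x])).

Hypothesis leq_fibers :
  forall k, #|[set x in X | f x == k]| <= #|[set y in Y | f y == k]|.

Lemma index_fiber_lt x : x \in X ->
  index x (enum [set x' in X | f x' == f x]) < size (enum [set y in Y | f y == f x]).
Proof.
move=> xX; rewrite -cardE; apply: leq_trans (leq_fibers (f x)).
by rewrite cardE index_mem mem_enum inE xX eqxx.
Qed.

Lemma fiber_matchP x : x \in X -> fiber_match x \in Y /\ f (fiber_match x) = f x.
Proof.
move=> xX; have : fiber_match x \in [set y in Y | f y == f x].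
  by rewrite -mem_enum; apply: mem_nth; apply: index_fiber_lt.
by rewrite inE => /andP[-> /eqP].
Qed.

Lemma fiber_match_inj : {in X &, injective fiber_match}.
Proof.
move=> x y xX yX eq_xy.
have fxy : f x = f y by rewrite -(fiber_matchP xX).2 eq_xy (fiber_matchP yX).2.
have ltx := index_fiber_lt xX; have lty := index_fiber_lt yX; rewrite fxy in ltx.
move: eq_xy; rewrite /fiber_match fxy (set_nth_default x _ lty) => /eqP.
rewrite nth_uniq ?enum_uniq // => /eqP/(index_inj x).
by apply; rewrite mem_enum inE ?xX ?yX ?fxy eqxx.
Qed.

Lemma leq_card_fibers : #|X| <= #|Y|.
Proof.
rewrite -(card_in_imset fiber_match_inj); apply: subset_leq_card; apply/subsetP => y.
by case/imsetP=> x xX ->; case: (fiber_matchP xX).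
Qed.

End FiberMatch.

Lemma mul_bin_split n a c : 'C(n, a + c) * 'C(a + c, c) = 'C(n, a) * 'C(n - a, c).
Proof.
case: (leqP (a + c) n) => le_acn; last first.
  rewrite bin_small // mul0n; case: (ltnP n a) => lt_na; first by rewrite bin_small.
  rewrite (@bin_small (n - a) c) ?muln0 //; lia.
have h1 := bin_fact le_acn.
have h2 := @bin_fact (a + c) c (leq_addl _ _).
have h3 := @bin_fact n a (leq_trans (leq_addr _ _) le_acn).
have h4 := @bin_fact (n - a) c ltac:(lia).
rewrite (_ : a + c - c = a) in h2; last by lia.
rewrite (_ : n - a - c = n - (a + c)) in h4; last by lia.
apply/eqP; rewrite -(@eqn_pmul2r (a`! * c`! * (n - (a + c))`!)); last first.
  by rewrite !muln_gt0 !fact_gt0.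
apply/eqP; transitivity n`!; first by rewrite -h1 -h2; ring.
by rewrite -h3 -h4; ring.
Qed.

Lemma card_draws_disjoint (T : finType) (X : {set T}) n :
  #|[set C : {set T} | (#|C| == n) && [disjoint C & X]]| = 'C(#|T| - #|X|, n).
Proof.
rewrite (_ : #|T| - #|X| = #|~: X|); last by rewrite -(cardsC X) addKn.
rewrite -cards_draws; apply: eq_card => C; rewrite !inE.
by rewrite disjoints_subset andbC.
Qed.

Lemma card_draws_disjoint_mem (T : finType) (X : {set T}) (i : T) n : i \notin X ->
  #|[set C : {set T} | [&& #|C| == n.+1, i \in C & [disjoint C & X]]]| =
  'C(#|T| - #|X| - 1, n).
Proof.
move=> iX.
have notin_disj (A : {set T}) : [disjoint A & i |: X] -> i \notin A.
  by rewrite disjoints_subset => /subsetP sA; apply/negP => /sA; rewrite !inE eqxx.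
have -> : [set C : {set T} | [&& #|C| == n.+1, i \in C & [disjoint C & X]]] =
  [set i |: C | C in [set C : {set T} | (#|C| == n) && [disjoint C & i |: X]]].
  apply/setP => C; rewrite inE; apply/idP/imsetP.
  - case/and3P => /eqP cC iC dC; exists (C :\ i); last by rewrite setD1K.
    rewrite inE; apply/andP; split.
      by move: cC; rewrite (cardsD1 i) iC add1n => -[->].
    rewrite disjoints_subset; apply/subsetP => x; rewrite !inE => /andP[xi xC].
    rewrite negb_or xi /=; move: dC; rewrite disjoints_subset => /subsetP/(_ x xC).
    by rewrite inE.
  - case=> C'; rewrite inE => /andP[/eqP cC dC] ->.
    apply/and3P; split; first by rewrite cardsU1 (notin_disj _ dC) cC.
      by rewrite setU11.
    rewrite disjoints_subset.
    apply/subsetP => x; rewrite !inE => /orP[/eqP -> | xC]; first by rewrite iX.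
    move: dC; rewrite disjoints_subset => /subsetP/(_ x xC); rewrite !inE.
    by rewrite negb_or => /andP[].
rewrite card_in_imset; last first.
  move=> A B; rewrite !inE => /andP[_ /notin_disj iA] /andP[_ /notin_disj iB] eqAB.
  by rewrite -(setU1K iA) eqAB setU1K.
by rewrite card_draws_disjoint cardsU1 iX add1n subnS -subn1.
Qed.

Lemma card_pairs_const (T1 T2 : finType) (P : pred T1) (Q : T1 -> pred T2) c :
  (forall B, P B -> #|[set C | Q B C]| = c) ->
  #|[set BC : T1 * T2 | P BC.1 && Q BC.1 BC.2]| = #|[set B | P B]| * c.
Proof.
move=> cardQ; rewrite -sum_nat_const -sum1_card.
rewrite (eq_bigr (fun B => #|[set C | Q B C]|)); last by move=> B; rewrite inE => /cardQ.
under [RHS]eq_bigr do rewrite -sum1_card big_mkcond.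
rewrite pair_big /= [LHS]big_mkcond [RHS]big_mkcond /=.
apply: eq_bigr => [[B C]] _ /=; rewrite !inE /=.
by case: (P B).
Qed.

Lemma card_notin_lt (T : finType) (x : T) (X : {set T}) : x \notin X -> #|X| < #|T|.
Proof.
move=> xX; rewrite -cardsT proper_card // properT.
by apply: contraNneq xX => ->; rewrite inE.
Qed.

Lemma cell_sub_mkcol (F : fieldType) t p (cells : seq 'rV[F]_p) x :
  size cells <= t -> x \in cells -> (x <= mkcol t cells)%MS.
Proof.
move=> st xc; have lt : index x cells < t by apply: leq_trans st; rewrite index_mem.
have -> : x = row (Ordinal lt) (mkcol t cells).
  by apply/rowP => j; rewrite !mxE /= nth_index.
exact: row_sub.
Qed.

Lemma sub_cols_span (F : fieldType) t p (C : seq 'M[F]_(t, p)) (S : {set 'I_(size C)})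
    c (v : 'rV[F]_p) :
  c \in S -> (v <= nth 0%R C c)%MS -> (v <= cols_span S)%MS.
Proof. by move=> cS sv; apply: (sumsmx_sup c) => //; rewrite genmxE. Qed.

Section Construction.
Variables (F : fieldType) (s t p : nat) (xi : nat -> nat).
Hypotheses (s_ge2 : 2 <= s) (t_ge2 : 2 <= t) (p_eq : p = s * t).

Local Notation T := 'I_p.

(* A column of type T_r on (B, C) is labelled (r, (B, C)); a column of type T_1
   on A is labelled (1, (set0, A)). *)
Definition label := (nat * ({set T} * {set T}))%type.

Definition Tr_shape (r : nat) (BC : {set T} * {set T}) :=
  [&& #|BC.1| == t.-1, #|BC.2| == ((r - 1) * t).+1 & [disjoint BC.1 & BC.2]].

Definition labels : seq label :=
  flatten (map (fun A : {set T} => nseq (xi 1) (1, (set0, A)))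
            (enum [set A : {set T} | #|A| == t])) ++
  flatten [seq flatten (map (fun BC => nseq (xi r) (r, BC))
                           (enum [set BC | Tr_shape r BC])) | r <- iota 2 (s - 1)].

Definition column (l : label) : 'M[F]_(t, p) :=
  if l.1 == 1 then mkcol t (map (@unitv F p) (enum l.2.2))
  else mkcol t (map (@unitv F p) (enum l.2.1) ++ [:: (\sum_(c in l.2.2) unitv F c)%R]).

Lemma code_labels : code F s t p xi = map column labels.
Proof.
rewrite /code /labels map_cat; congr (_ ++ _).
  rewrite /colsT1 map_flatten -map_comp; congr flatten; apply: eq_map => A /=.
  by rewrite map_nseq.
rewrite map_flatten -map_comp; congr flatten; apply/eq_in_map => r.
rewrite mem_iota => /andP[r2 _] /=.
rewrite /colsTr map_flatten -map_comp; congr flatten; apply: eq_map => BC /=.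
rewrite map_nseq /column /=.
by have -> : (r == 1) = false by apply/eqP; lia.
Qed.

Definition label_wf (l : label) :=
  ((l.1 == 1) && (l.2.1 == set0) && (#|l.2.2| == t)) ||
  ((2 <= l.1 <= s) && Tr_shape l.1 l.2).

Lemma labels_wf l : l \in labels -> label_wf l.
Proof.
rewrite mem_cat => /orP[].
  case/flattenP => x /mapP[A]; rewrite mem_enum inE => cA -> /nseqP[-> _].
  by rewrite /label_wf /= eqxx cA.
case/flattenP => x /mapP[r]; rewrite mem_iota => /andP[r2 rs] ->.
case/flattenP => y /mapP[BC]; rewrite mem_enum inE => oBC -> /nseqP[-> _].
rewrite /label_wf /= oBC andbT; apply/orP; right; apply/andP; split => //; lia.
Qed.

Lemma count_labels (Q : pred label) : count Q labels =
  xi 1 * #|[set A : {set T} | (#|A| == t) && Q (1, (set0, A))]| +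
  \sum_(r <- iota 2 (s - 1)) xi r * #|[set BC | Tr_shape r BC && Q (r, BC)]|.
Proof.
rewrite count_cat count_flatten_nseq count_enum_set; congr (_ + _).
rewrite count_flatten -map_comp sumnE big_map; apply: eq_bigr => r _.
by rewrite /= (count_flatten_nseq Q (pair r)) count_enum_set.
Qed.

Lemma unitv_sub_column l a : label_wf l ->
  (a \in l.2.1) || ((l.1 == 1) && (a \in l.2.2)) -> (unitv F a <= column l)%MS.
Proof.
rewrite /column.
case/orP => [/andP[/andP[/eqP -> /eqP ->] /eqP cC] | /andP[/andP[l2 ls] /and3P[/eqP cB _ _]]].
  rewrite in_set0 eqxx /= => aC; apply: cell_sub_mkcol; first by rewrite size_map -cardE cC.
  by apply: map_f; rewrite mem_enum.
have -> : (l.1 == 1) = false by apply/eqP; lia.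
rewrite andFb orbF => aB; apply: cell_sub_mkcol.
  by rewrite size_cat size_map -cardE cB /=; lia.
by rewrite mem_cat; apply/orP; left; apply: map_f; rewrite mem_enum.
Qed.

Lemma sum_sub_column l : label_wf l -> l.1 != 1 ->
  ((\sum_(c in l.2.2) unitv F c)%R <= column l)%MS.
Proof.
rewrite /column.
case/orP => [/andP[/andP[/eqP -> _] _] | /andP[_ /and3P[/eqP cB _ _]]]; first by rewrite eqxx.
move=> l1; rewrite (negbTE l1); apply: cell_sub_mkcol.
  by rewrite size_cat size_map -cardE cB /=; lia.
by rewrite mem_cat mem_seq1 eqxx orbT.
Qed.

Lemma sum_union_sub_column l : label_wf l ->
  ((\sum_(c in l.2.1 :|: l.2.2) unitv F c)%R <= column l)%MS.
Proof.
move=> wl; move: (wl); rewrite /column.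
case/orP => [/andP[/andP[/eqP -> /eqP ->] /eqP cC] | /andP[/andP[l2 _] /and3P[/eqP cB _ dBC]]].
  rewrite set0U eqxx; apply: summx_sub => c cC'; apply: cell_sub_mkcol.
    by rewrite size_map -cardE cC.
  by apply: map_f; rewrite mem_enum.
have l1 : (l.1 == 1) = false by apply/eqP; lia.
rewrite (_ : (\sum_(c in l.2.1 :|: l.2.2) unitv F c =
  \sum_(c in l.2.1) unitv F c + \sum_(c in l.2.2) unitv F c)%R); last first.
  by rewrite -bigU //; apply: eq_bigl => c; rewrite !inE.
apply: addmx_sub; last by have := sum_sub_column wl (negbT l1); rewrite /column l1.
rewrite l1; apply: summx_sub => c cB'; apply: cell_sub_mkcol.
  by rewrite size_cat size_map -cardE cB /=; lia.
by rewrite mem_cat; apply/orP; left; apply: map_f; rewrite mem_enum.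
Qed.

Definition n_direct := xi 1 * 'C(p.-1, t.-1) +
  \sum_(r <- iota 2 (s - 1)) xi r * ('C(p.-1, t.-2) * 'C(p - t.-1, ((r - 1) * t).+1)).

Definition n_summand :=
  \sum_(r <- iota 2 (s - 1)) xi r * ('C(p.-1, t.-1) * 'C(p - t, (r - 1) * t)).

Variable i : T.

Definition direct (l : label) := (i \in l.2.1) || ((l.1 == 1) && (i \in l.2.2)).
Definition summand (l : label) := (l.1 != 1) && (i \in l.2.2).
Definition avoid (l : label) := (i \notin l.2.1) && (i \notin l.2.2).

Definition key (l : label) : nat * {set T} :=
  if summand l then (l.1, l.2.2 :\ i) else (l.1.+1, l.2.1 :|: l.2.2).

Lemma direct_not_summand l : label_wf l -> direct l -> ~~ summand l.
Proof.
rewrite /direct /summand.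
case/orP => [/andP[/andP[/eqP -> _] _] | /andP[_ /and3P[_ _ dBC]]]; first by rewrite eqxx.
case/orP => [iB|/andP[/eqP -> _]]; last by rewrite eqxx.
by rewrite (disjointFr dBC iB) andbF.
Qed.

Lemma direct_summand_avoid l : label_wf l -> direct l + summand l + avoid l = 1.
Proof.
move/direct_not_summand; rewrite /direct /summand /avoid.
by case: (i \in l.2.1); case: (i \in l.2.2); case: (l.1 == 1) => //=; move=> /(_ isT).
Qed.

Lemma card_T1_direct :
  #|[set A : {set T} | (#|A| == t) && direct (1, (set0, A))]| = 'C(p.-1, t.-1).
Proof.
have := @card_draws_disjoint_mem _ set0 i t.-1 (negbT (in_set0 i)).
rewrite card_ord cards0 subn0 subn1 prednK; last by lia.
move=> <-; apply: eq_card => A; rewrite !inE /direct /= in_set0.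
by rewrite disjoints_subset setC0 subsetT andbT.
Qed.

Lemma card_Tr_direct r : 2 <= r ->
  #|[set BC | Tr_shape r BC && direct (r, BC)]| =
  'C(p.-1, t.-2) * 'C(p - t.-1, ((r - 1) * t).+1).
Proof.
move=> r2.
have -> : #|[set BC | Tr_shape r BC && direct (r, BC)]| =
  #|[set BC : {set T} * {set T} | ((#|BC.1| == t.-1) && (i \in BC.1)) &&
      ((#|BC.2| == ((r - 1) * t).+1) && [disjoint BC.2 & BC.1])]|.
  apply: eq_card => -[B C]; rewrite !inE /Tr_shape /direct /=.
  have -> : (r == 1) = false by apply/eqP; lia.
  rewrite orbF disjoint_sym.
  by case: (#|B| == t.-1); case: (i \in B); rewrite /= ?andbT ?andbF.
rewrite (card_pairs_const (c := 'C(p - t.-1, ((r - 1) * t).+1))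
  (P := fun B : {set T} => (#|B| == t.-1) && (i \in B))
  (Q := fun B C : {set T} => (#|C| == ((r - 1) * t).+1) && [disjoint C & B])); last first.
  by move=> B /andP[/eqP cB _]; rewrite card_draws_disjoint card_ord cB.
congr (_ * _).
have := @card_draws_disjoint_mem _ set0 i t.-2 (negbT (in_set0 i)).
rewrite card_ord cards0 subn0 subn1 (_ : (t.-2).+1 = t.-1); last by lia.
move=> <-; apply: eq_card => A; rewrite !inE.
by rewrite disjoints_subset setC0 subsetT andbT.
Qed.

Lemma count_direct : count direct labels = n_direct.
Proof.
rewrite count_labels /n_direct card_T1_direct; congr (_ + _).
rewrite big_seq [RHS]big_seq; apply: eq_bigr => r; rewrite mem_iota => /andP[r2 _].
by rewrite card_Tr_direct.
Qed.

Lemma card_Tr_summand r : 2 <= r ->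
  #|[set BC | Tr_shape r BC && summand (r, BC)]| = 'C(p.-1, t.-1) * 'C(p - t, (r - 1) * t).
Proof.
move=> r2.
have -> : #|[set BC | Tr_shape r BC && summand (r, BC)]| =
  #|[set BC : {set T} * {set T} | ((#|BC.1| == t.-1) && [disjoint BC.1 & [set i]]) &&
      [&& #|BC.2| == ((r - 1) * t).+1, i \in BC.2 & [disjoint BC.2 & BC.1]]]|.
  apply: eq_card => -[B C]; rewrite !inE /Tr_shape /summand /=.
  have -> : (r == 1) = false by apply/eqP; lia.
  rewrite [[disjoint B & [set i]]]disjoint_sym disjoints1; apply/idP/idP.
    case/and3P => /and3P[-> -> dBC] _ iC; rewrite iC /= (disjointFl dBC iC) /=.
    by rewrite disjoint_sym.
  by case/and4P => /andP[-> _] -> -> dCB; rewrite disjoint_sym dCB.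
rewrite (card_pairs_const (c := 'C(p - t, (r - 1) * t))
  (P := fun B : {set T} => (#|B| == t.-1) && [disjoint B & [set i]])
  (Q := fun B C : {set T} => [&& #|C| == ((r - 1) * t).+1, i \in C & [disjoint C & B]])); last first.
  move=> B /andP[/eqP cB dB]; rewrite card_draws_disjoint_mem ?card_ord ?cB; last first.
    by move: dB; rewrite disjoint_sym disjoints1.
  congr 'C(_, _); lia.
by rewrite card_draws_disjoint card_ord cards1 subn1.
Qed.

Lemma count_summand : count summand labels = n_summand.
Proof.
rewrite count_labels /n_summand.
rewrite (_ : #|[set A : {set T} | _ && summand _]| = 0); last first.
  by apply: eq_card0 => A; rewrite !inE /summand /= andbF.
rewrite muln0 add0n big_seq [RHS]big_seq; apply: eq_bigr => r.
by rewrite mem_iota => /andP[r2 _]; rewrite card_Tr_summand.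
Qed.

Lemma card_Tr_union r BC : 1 <= r -> Tr_shape r BC -> #|BC.1 :|: BC.2| = r * t.
Proof.
move=> r1 /and3P[/eqP cB /eqP cC dBC].
rewrite cardsU (disjoint_setI0 dBC) cards0 subn0 cB cC.
rewrite -[in RHS](subnK r1) mulnDl mul1n; set m := (r - 1) * t; lia.
Qed.

Definition key_ok (k : nat * {set T}) :=
  [&& 2 <= k.1 <= s, i \notin k.2 & #|k.2| == (k.1 - 1) * t].

Lemma summand_key_ok l : l \in labels -> summand l -> key_ok (key l).
Proof.
move=> /labels_wf + sl; rewrite /label_wf /key sl; move: sl => /andP[l1 iC].
rewrite (negbTE l1) /= => /andP[rs /and3P[_ cC _]].
rewrite /key_ok /= rs !inE eqxx /=; move: cC; rewrite (cardsD1 i) iC add1n.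
by case/eqP => ->.
Qed.

Lemma avoid_key l : avoid l -> key l = (l.1.+1, l.2.1 :|: l.2.2).
Proof. by case/andP => _ iC; rewrite /key /summand (negbTE iC) andbF. Qed.

Lemma avoid_key_ok l : l \in labels -> avoid l -> key_ok (key l).
Proof.
move=> /labels_wf + al; rewrite avoid_key //; move: al => /andP[iB iC].
rewrite /label_wf /key_ok /=.
case/orP => [/andP[/andP[/eqP -> /eqP ->] /eqP cC] | /andP[/andP[l2 ls] lT]].
  by rewrite /= set0U iC cC mul1n eqxx; lia.
have cU := card_Tr_union (ltnW l2) lT.
rewrite !inE negb_or iB iC cU subn1 /= eqxx andbT ltnS (ltnW l2) /=.
rewrite -(ltn_pmul2r (ltnW t_ge2)) -cU -p_eq -[X in _ < X](card_ord p).
by apply: (card_notin_lt (x := i)); rewrite inE negb_or iB iC.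
Qed.

Lemma count_key_notok (P : pred label) k : ~~ key_ok k ->
  (forall l, l \in labels -> P l -> key_ok (key l)) ->
  count (fun l => P l && (key l == k)) labels = 0.
Proof.
move=> nk okP; apply/eqP; rewrite -leqn0 leqNgt -has_count; apply/hasPn => l lin.
by apply/negP => /andP[Pl /eqP ek]; move: (okP l lin Pl); rewrite ek (negbTE nk).
Qed.

Lemma card_Tr_summand_key r (D : {set T}) : key_ok (r, D) ->
  #|[set BC | Tr_shape r BC && (summand (r, BC) && (key (r, BC) == (r, D)))]| =
  'C(p - ((r - 1) * t).+1, t.-1).
Proof.
case/and3P => /= /andP[r2 _] iD /eqP cD.
have -> : #|[set BC | Tr_shape r BC && (summand (r, BC) && (key (r, BC) == (r, D)))]| =
  #|[set BC : {set T} * {set T} | ((#|BC.1| == t.-1) && [disjoint BC.1 & i |: D]) &&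
      (BC.2 == i |: D)]|.
  apply: eq_card => -[B C]; rewrite !inE /Tr_shape /key /summand /=.
  have -> : (r == 1) = false by apply/eqP; lia.
  case iC: (i \in C) => /=; last first.
    rewrite andbF; case: (@eqP _ C (i |: D)) => [eC | _]; last by rewrite andbF.
    by rewrite eC setU11 in iC.
  rewrite xpair_eqE eqxx /=; apply/idP/idP.
    case/andP => /and3P[cB _ dBC] /eqP CD.
    have eC : C = i |: D by rewrite -CD setD1K.
    by rewrite cB -eC dBC eC eqxx.
  case/andP => /andP[cB dB] /eqP eC; rewrite eC cB dB cardsU1 iD cD setU1K //.
  by rewrite !eqxx.
rewrite (card_pairs_const (c := 1)
  (P := fun B : {set T} => (#|B| == t.-1) && [disjoint B & i |: D])
  (Q := fun B C : {set T} => C == i |: D)); last first.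
  by move=> B _; rewrite (_ : [set C | C == i |: D] = [set i |: D]) ?cards1 //;
     apply/setP => C; rewrite !inE.
by rewrite muln1 card_draws_disjoint card_ord cardsU1 iD cD.
Qed.

Lemma count_summand_key r0 D : key_ok (r0, D) ->
  count (fun l => summand l && (key l == (r0, D))) labels =
  xi r0 * 'C(p - ((r0 - 1) * t).+1, t.-1).
Proof.
move=> okD; case/and3P: (okD) => /= /andP[r2 rs] _ _; rewrite count_labels.
rewrite (_ : #|[set A : {set T} | _ && (summand _ && _)]| = 0); last first.
  by apply: eq_card0 => A; rewrite !inE /summand /= andbF.
rewrite muln0 add0n (@sum_seq_supp1 _ _ _ r0) ?iota_uniq ?card_Tr_summand_key //.
- by rewrite mem_iota; apply/andP; split; lia.
move=> r rr0; apply/eqP; rewrite muln_eq0; apply/orP; right; apply/eqP.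
apply: eq_card0 => -[B C]; rewrite !inE /key /=.
case: (summand _); last by rewrite !andbF.
by case: eqP => [[er _] | _]; [move: rr0; rewrite er eqxx | rewrite !andbF].
Qed.

Lemma avoid_key_eq l k :
  (avoid l && (key l == k)) = (avoid l && ((l.1.+1, l.2.1 :|: l.2.2) == k)).
Proof. by case al: (avoid l) => //=; rewrite avoid_key. Qed.

Lemma card_Tr_avoid_key r (D : {set T}) : 2 <= r -> i \notin D -> #|D| = r * t ->
  #|[set BC | Tr_shape r BC && (avoid (r, BC) && ((r.+1, BC.1 :|: BC.2) == (r.+1, D)))]| =
  'C(r * t, t.-1).
Proof.
move=> r2 iD cD.
rewrite (_ : [set BC | _] = [set BC : {set T} * {set T} |
      ((#|BC.1| == t.-1) && (BC.1 \subset D)) && (BC.2 == D :\: BC.1)]); last first.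
  apply/setP => -[B C]; rewrite !inE /avoid /= xpair_eqE eqxx /=.
  apply/idP/idP.
    case/and3P => /and3P[cB cC dBC] /andP[iB iC] /eqP eD.
    rewrite cB -eD subsetUl /=; apply/eqP/setP => x; rewrite !inE.
    case xC: (x \in C); last by case: (x \in B).
    by rewrite (disjointFl dBC xC).
  case/andP => /andP[/eqP cB sBD] /eqP eC.
  have iB : i \notin B by apply: contra iD; apply: (subsetP sBD).
  have iC : i \notin D :\: B by rewrite inE (negbTE iD) andbF.
  rewrite /Tr_shape cB eqxx eC iB iC /= cardsDS // cD cB.
  rewrite (_ : r * t - t.-1 = ((r - 1) * t).+1) ?eqxx /=; last first.
    rewrite -[in LHS](subnK (ltnW r2)) mulnDl mul1n; set m := (r - 1) * t; lia.
  apply/andP; split.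
    rewrite -setI_eq0; apply/eqP/setP => x; rewrite !inE.
    by case: (x \in B); rewrite ?andbF.
  apply/eqP/setP => x; rewrite !inE; case xB: (x \in B) => //=.
  by rewrite (subsetP sBD _ xB).
rewrite (card_pairs_const (c := 1)
  (P := fun B : {set T} => (#|B| == t.-1) && (B \subset D))
  (Q := fun B C : {set T} => C == D :\: B)); last first.
  by move=> B _; rewrite (_ : [set C | C == D :\: B] = [set D :\: B]) ?cards1 //;
     apply/setP => C; rewrite !inE.
by rewrite muln1 -cD -cards_draws; apply: eq_card => B; rewrite !inE andbC.
Qed.

Lemma count_avoid_key r0 D : key_ok (r0, D) ->
  count (fun l => avoid l && (key l == (r0, D))) labels =
  if r0 == 2 then xi 1 else xi r0.-1 * 'C((r0 - 1) * t, t.-1).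
Proof.
case/and3P => /= /andP[r2 rs] iD /eqP cD.
under eq_count do rewrite avoid_key_eq.
rewrite count_labels.
case: (r0 =P 2) => [e2 | n2].
  subst r0; rewrite big1_seq ?addn0; last first.
    move=> r /andP[_]; rewrite mem_iota => /andP[r2' _].
    apply/eqP; rewrite muln_eq0; apply/orP; right; apply/eqP.
    apply: eq_card0 => -[B C]; rewrite !inE /=.
    rewrite xpair_eqE (_ : (r.+1 == 2) = false) ?andbF //; apply/eqP; lia.
  rewrite (_ : [set A : {set T} | _] = [set D]) ?cards1 ?muln1 //.
  apply/setP => A; rewrite !inE /avoid /= in_set0 /= xpair_eqE eqxx set0U /=.
  case: (@eqP _ A D) => [->|_]; last by rewrite !andbF.
  by rewrite cD mul1n eqxx iD.
have [r er0] : exists r, r0 = r.+1 by exists r0.-1; lia.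
subst r0; rewrite (_ : #|[set A : {set T} | _]| = 0); last first.
  apply: eq_card0 => A; rewrite !inE /= xpair_eqE (_ : (2 == r.+1) = false) ?andbF //.
  by apply/eqP => e; apply: n2.
rewrite muln0 add0n (@sum_seq_supp1 _ _ _ r) ?iota_uniq //; first last.
- move=> r' rr'; apply/eqP; rewrite muln_eq0; apply/orP; right; apply/eqP.
  apply: eq_card0 => -[B C]; rewrite !inE /= xpair_eqE eqSS (negbTE rr') andbF.
  by rewrite !andbF.
- by rewrite mem_iota; apply/andP; split; lia.
rewrite subSS subn0 in cD *; rewrite -(card_Tr_avoid_key _ iD cD); last by lia.
by congr (_ * _); apply: eq_card => BC; rewrite !inE.
Qed.

Hypotheses
  (xi_step : forall r, 2 <= r <= s.-1 ->
     'C(p - t, (r - 1) * t + 1) * xi r = 'C(p - t, r * t) * xi r.+1)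
  (xi_first : (s - 1) * xi 1 = 'C(p - t, t) * xi 2).

Lemma xi_balance_first : xi 2 * 'C(p - t.+1, t.-1) = xi 1.
Proof.
have en : p - t = (s - 1) * t by rewrite p_eq mulnBl mul1n.
set n := p - t.
rewrite (_ : p - t.+1 = n.-1); last by rewrite /n; lia.
have hd := mul_bin_diag n t.-1; rewrite prednK in hd; last by lia.
apply/eqP; rewrite -(@eqn_pmul2l ((s - 1) * t)); last first.
  by rewrite muln_gt0; apply/andP; split; lia.
apply/eqP; transitivity (xi 2 * (n * 'C(n.-1, t.-1))); first by rewrite /n en; ring.
rewrite hd; transitivity (t * ('C(n, t) * xi 2)); first by ring.
by rewrite -xi_first; ring.
Qed.

Lemma xi_balance_step r : 2 <= r <= s.-1 ->
  xi r.+1 * 'C(p - (r * t).+1, t.-1) = xi r * 'C(r * t, t.-1).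
Proof.
move=> r_range; have h := xi_step r_range; rewrite addn1 in h.
have /andP[r2 rs] := r_range.
have en : p - t = (s - 1) * t by rewrite p_eq mulnBl mul1n.
set n := p - t; set a := ((r - 1) * t).+1; set c := t.-1.
have erm : r * t = (r - 1) * t + t.
  by rewrite -[in LHS](subnK (ltnW r2)) mulnDl mul1n.
have eac : a + c = r * t by rewrite /a /c erm; lia.
have ena : n - a = p - (r * t).+1 by rewrite /n /a erm; lia.
have bm := mul_bin_split n a c; rewrite eac ena in bm.
have an : a <= n.
  have : r * t <= (s - 1) * t by rewrite leq_mul2r; apply/orP; right; lia.
  by rewrite /a /n en erm; lia.
apply/eqP; rewrite -(@eqn_pmul2l 'C(n, a)); last by rewrite bin_gt0.
apply/eqP; transitivity (xi r.+1 * ('C(n, a) * 'C(n - a, c))); first by rewrite ena; ring.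
rewrite ena -bm; transitivity ('C(n, r * t) * xi r.+1 * 'C(r * t, c)); first by ring.
by rewrite -h; ring.
Qed.

Lemma key_balance r0 : 2 <= r0 <= s ->
  xi r0 * 'C(p - ((r0 - 1) * t).+1, t.-1) =
  if r0 == 2 then xi 1 else xi r0.-1 * 'C((r0 - 1) * t, t.-1).
Proof.
case/andP => r2 rs; case: (r0 =P 2) => [-> | n2]; first by rewrite mul1n xi_balance_first.
have [r er0] : exists r, r0 = r.+1 by exists r0.-1; lia.
by rewrite er0 /= subSS subn0 xi_balance_step //; apply/andP; split; lia.
Qed.

Lemma count_summand_avoid_key k :
  count (fun l => summand l && (key l == k)) labels =
  count (fun l => avoid l && (key l == k)) labels.
Proof.
case ok: (key_ok k); last first.
  rewrite !count_key_notok ?ok //.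
    by move=> l lin; apply: avoid_key_ok.
  by move=> l lin; apply: summand_key_ok.
case: k ok => r0 D ok; rewrite count_summand_key // count_avoid_key // key_balance //.
by case/and3P: ok.
Qed.

Local Notation idx := 'I_(size (code F s t p xi)).

Definition dummy_label : label := (0, (set0, set0)).
Definition label_of (j : idx) := nth dummy_label labels j.
Definition Direct := [set j | direct (label_of j)].
Definition Summand := [set j | summand (label_of j)].
Definition Avoid := [set j | avoid (label_of j)].

Lemma size_code_labels : size (code F s t p xi) = size labels.
Proof. by rewrite code_labels size_map. Qed.

Lemma label_of_in j : label_of j \in labels.
Proof. by rewrite /label_of mem_nth // -size_code_labels. Qed.

Lemma nth_code (j : idx) : nth 0%R (code F s t p xi) j = column (label_of j).
Proof.
have : j < size labels by rewrite -size_code_labels.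
by rewrite /label_of; move: (nat_of_ord j) => n ltn; rewrite code_labels (nth_map dummy_label).
Qed.

Lemma card_lab (P : pred label) : #|[set j | P (label_of j)]| = count P labels.
Proof. exact: (card_set_nth _ _ size_code_labels). Qed.

Lemma card_key_fibers k :
  #|[set j in Summand | key (label_of j) == k]| = #|[set j in Avoid | key (label_of j) == k]|.
Proof.
have fiberE (P : pred label) : #|[set j in [set j | P (label_of j)] | key (label_of j) == k]| =
    count (fun l => P l && (key l == k)) labels.
  by rewrite -card_lab; apply: eq_card => j; rewrite !inE.
by rewrite !fiberE count_summand_avoid_key.
Qed.

Lemma card_Summand_Avoid : #|Summand| = #|Avoid|.
Proof.
apply/eqP; rewrite eqn_leq; apply/andP.
by split; apply: (leq_card_fibers (f := fun j => key (label_of j))) => k; rewrite card_key_fibers.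
Qed.

Lemma size_code : size (code F s t p xi) = n_direct + 2 * n_summand.
Proof.
have := count_partition3 (a := direct) (b := summand) (c := avoid) (s := labels).
rewrite -size_code_labels => <-; last by move=> l /labels_wf; apply: direct_summand_avoid.
rewrite count_direct count_summand -(card_lab avoid) -/Avoid -card_Summand_Avoid.
by rewrite /Summand card_lab count_summand; lia.
Qed.

Definition partner := fiber_match (fun j => key (label_of j)) Summand Avoid.

Lemma partner_in j : j \in Summand -> partner j \in Avoid /\ key (label_of (partner j)) = key (label_of j).
Proof. by apply: fiber_matchP => k; rewrite card_key_fibers. Qed.

Lemma partner_inj : {in Summand &, injective partner}.
Proof. by apply: fiber_match_inj => k; rewrite card_key_fibers. Qed.

Definition recovery (w : idx) : {set idx} :=
  if w \in Summand then [set w; partner w] else [set w].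

Lemma recoveryP v y : y \in recovery v -> y = v \/ (v \in Summand /\ y = partner v).
Proof.
rewrite /recovery; case: ifP => vS; rewrite !inE; last by move/eqP; left.
by case/orP => /eqP ->; [left | right].
Qed.

Lemma Direct_Summand_notin_Avoid w : w \in Direct :|: Summand -> w \notin Avoid.
Proof.
rewrite !inE /direct /summand /avoid => /orP[].
  by case/orP => [-> | /andP[_ ->]]; rewrite ?andbF.
by case/andP => _ ->; rewrite andbF.
Qed.

Lemma recovery_disjoint w w' : w \in Direct :|: Summand -> w' \in Direct :|: Summand ->
  w != w' -> [disjoint recovery w & recovery w'].
Proof.
move=> /Direct_Summand_notin_Avoid wA /Direct_Summand_notin_Avoid w'A ww'.
rewrite -setI_eq0; apply/eqP/setP => y; rewrite inE in_set0.
apply/negP => /andP[/recoveryP yR /recoveryP yR'].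
case: yR => [ew | [wS ew]]; case: yR' => [ew' | [w'S ew']].
- by move: ww'; rewrite -ew -ew' eqxx.
- by move: wA; rewrite -ew ew' (partner_in w'S).1.
- by move: w'A; rewrite -ew' ew (partner_in wS).1.
- by move: ww'; rewrite (partner_inj wS w'S) ?eqxx // -ew -ew'.
Qed.

Lemma recovery_span w : w \in Direct :|: Summand -> (unitv F i <= cols_span (recovery w))%MS.
Proof.
move=> wDS; have wl := labels_wf (label_of_in w).
rewrite /recovery; case: ifP => wS; last first.
  apply: (sub_cols_span (c := w)); first by rewrite inE.
  rewrite nth_code; apply: unitv_sub_column wl _.
  by move: wDS; rewrite in_setU wS orbF inE.
have [pA pkey] := partner_in wS.
have pl := labels_wf (label_of_in (partner w)).
move: (wS) (pA); rewrite !inE => /andP[l1 iC] pav.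
move: pkey; rewrite avoid_key // /key /summand l1 iC /= => -[_ eBC].
have -> : unitv F i = (\sum_(c in (label_of w).2.2) unitv F c -
    \sum_(c in (label_of (partner w)).2.1 :|: (label_of (partner w)).2.2) unitv F c)%R.
  by rewrite eBC (big_setD1 i iC) /= addrK.
apply: addmx_sub.
  apply: (sub_cols_span (c := w)); first by rewrite !inE eqxx.
  by rewrite nth_code; apply: sum_sub_column.
rewrite eqmx_opp; apply: (sub_cols_span (c := partner w)); first by rewrite !inE eqxx orbT.
by rewrite nth_code; apply: sum_union_sub_column.
Qed.

Lemma card_Direct_Summand : #|Direct :|: Summand| = n_direct + n_summand.
Proof.
rewrite cardsU (_ : Direct :&: Summand = set0) ?cards0 ?subn0.
  by rewrite /Direct /Summand !card_lab count_direct count_summand.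
apply/setP => j; rewrite !inE; apply/negP => /andP[dj sj].
by move: (direct_not_summand (labels_wf (label_of_in j)) dj); rewrite sj.
Qed.

Lemma code_PIR_at : exists S : 'I_(n_direct + n_summand) -> {set idx},
  (forall j j', j != j' -> [disjoint S j & S j']) /\
  (forall j, (unitv F i <= cols_span (S j))%MS).
Proof.
exists (fun j => recovery (enum_val (cast_ord (esym card_Direct_Summand) j))); split.
  move=> j j' jj'; apply: recovery_disjoint; try exact: enum_valP.
  by apply: contra jj' => /eqP /enum_val_inj /cast_ord_inj ->.
by move=> j; apply: recovery_span; apply: enum_valP.
Qed.

End Construction.

Lemma n_direct_beta s t p (xi : nat -> nat) : 2 <= s -> 2 <= t -> p = s * t ->
  (t - 1) * n_direct s t p xi = 'C(p - 1, t - 2) * beta s t p xi.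
Proof.
move=> s2 t2 ep.
have hb := mul_bin_left (p - 1) (t - 2).
have e1 : (t - 2).+1 = t - 1 by lia.
have e2 : p - 1 - (t - 2) = p - t + 1 by rewrite ep; nia.
rewrite e1 e2 in hb.
have ep1 : p.-1 = p - 1 by lia.
rewrite /n_direct /beta !mulnDr ep1.
have -> : index_iota 2 s.+1 = iota 2 (s - 1) by rewrite /index_iota; congr iota; lia.
rewrite !big_distrr /=; congr (_ + _).
  have -> : t.-1 = (t - 2).+1 by lia.
  by rewrite e1 mulnCA hb; ring.
apply: eq_bigr => r _.
have -> : t.-2 = t - 2 by lia.
have -> : p - t.-1 = p - t + 1 by rewrite ep; nia.
by rewrite !addn1; ring.
Qed.

Lemma n_summand_gamma s t p (xi : nat -> nat) : 2 <= s -> 2 <= t -> p = s * t ->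
  (t - 1) * n_summand s t p xi = 'C(p - 1, t - 2) * gamma s t p xi.
Proof.
move=> s2 t2 ep.
have hb := mul_bin_left (p - 1) (t - 2).
have e1 : (t - 2).+1 = t - 1 by lia.
have e2 : p - 1 - (t - 2) = p - t + 1 by rewrite ep; nia.
rewrite e1 e2 in hb.
rewrite /n_summand /gamma.
have -> : index_iota 1 s = iota 1 (s - 1) by rewrite /index_iota; congr iota; lia.
have -> : iota 2 (s - 1) = map S (iota 1 (s - 1)) by rewrite (iotaDl 1 1).
rewrite big_map !big_distrr /=; apply: eq_bigr => r _.
have -> : p.-1 = p - 1 by lia.
have -> : t.-1 = t - 1 by lia.
have -> : r.+1 - 1 = r by lia.
transitivity (xi r.+1 * 'C(p - t, r * t) * ((t - 1) * 'C(p - 1, t - 1))); first by ring.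
by rewrite hb; ring.
Qed.

Import Num.Theory.
Local Open Scope ring_scope.

Lemma ratio_natM (c x y : nat) : c != 0%N ->
  ((c * x)%:R / (c * y)%:R : rat) = x%:R / y%:R.
Proof. by move=> c0; rewrite !natrM -mulf_div divff ?mul1r // pnatr_eq0. Qed.

Lemma ratio_natDM (a u b g c d : nat) : c != 0%N -> d != 0%N ->
  (c * a = d * b)%N -> (c * u = d * g)%N ->
  ((a + u)%:R / (a + 2 * u)%:R : rat) = (b + g)%:R / (b + 2 * g)%:R.
Proof.
move=> c0 d0 ab ug.
rewrite -(ratio_natM (a + u) (a + 2 * u) c0) -(ratio_natM (b + g) (b + 2 * g) d0).
by rewrite !mulnDr !muln0 ab ug.
Qed.

Theorem theorem8 (F : finFieldType) (s t p : nat) (xi : nat -> nat) :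
  (2 <= s)%N -> (2 <= t)%N -> p = (s * t)%N ->
  (forall r, (1 <= r <= s)%N -> (0 < xi r)%N) ->
  (forall r, (2 <= r <= s.-1)%N ->
     ('C(p - t, (r - 1) * t + 1) * xi r = 'C(p - t, r * t) * xi r.+1)%N) ->
  ((s - 1) * xi 1 = 'C(p - t, t) * xi 2)%N ->
  exists k : nat,
    is_kPIR (code F s t p xi) k /\
    (k%:R / (size (code F s t p xi))%:R : rat) =
      (beta s t p xi + gamma s t p xi)%:R /
      (beta s t p xi + 2 * gamma s t p xi)%:R.
Proof.
move=> s2 t2 ep _ xi_step xi_first.
exists (n_direct s t p xi + n_summand s t p xi)%N; split.
  by move=> i; apply: code_PIR_at.
(* [size_code] classifies columns relative to a coordinate; any one will do. *)
have p_gt0 : (0 < p)%N by rewrite ep; lia.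
rewrite (size_code F s2 t2 ep (Ordinal p_gt0) xi_step xi_first).
apply: (ratio_natDM _ _ (n_direct_beta xi s2 t2 ep) (n_summand_gamma xi s2 t2 ep)).
  by apply/eqP; lia.
by rewrite -lt0n bin_gt0; nia.
Qed.
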